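(* Let $\mathcal{O}$ be a small category. If $\sigma\colon\Delta[0]\to N\mathcal{O}$ picks out the object $\sigma_0$, then $\iota_0\colon\mathcal{O}(-,\sigma_0)\times\Delta[0]\to F\sigma$ is an isomorphism. If $n>0$ and $\sigma\colon\Delta[n]\to N\mathcal{O}$ corresponds to $\sigma_0\xrightarrow{g_1}\sigma_1\to\cdots\xrightarrow{g_n}\sigma_n$, then the square $$\begin{array}{ccc}\mathcal{O}(-,\sigma_0)\times\Delta[n-1] & \xrightarrow{\iota_{n-1}\circ (g_{1*}\times 1)} & F(\sigma\delta_0)\\ \downarrow{\scriptstyle 1\times\delta_0} & & \downarrow\\ \mathcal{O}(-,\sigma_0)\times\Delta[n] & \xrightarrow{\iota_n} & F\sigma\end{array}$$ is a pushout of contravariant functors $\mathcal{O}\to\mathcal{S}$, where $\delta_0\colon\Delta[n-1]\to\Delta[n]$ is the inclusion of the face opposite $0$, $g_{1*}\colon\mathcal{O}(-,\sigma_0)\to\mathcal{O}(-,\sigma_1)$ is postcomposition with $g_1$, $\iota_{n-1}$ is the map $\mathcal{O}(-,\sigma_1)\times\Delta[n-1]\to F(\sigma\delta_0)$ for the simplex $\sigma\delta_0$ (whose initial vertex is $\sigma_1$), and the right vertical map is induced by $\delta_0$.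
   Context: $\mathcal{S}$ is the category of simplicial sets, $N$ the nerve, $\Delta[n]$ the standard $n$-simplex, $\mathcal{O}(-,c)$ the representable contravariant set-valued functor. For $\phi\colon X\to N\mathcal{O}$, $F\phi$ is the contravariant functor $\mathcal{O}\to\mathcal{S}$ with $(F\phi)(b)$ the pullback of $X\xrightarrow{\phi}N\mathcal{O}\leftarrow N(b{\downarrow}\mathcal{O})$, functorial in $b$ via precomposition. A $k$-simplex of $(F\sigma)(b)$ for $\sigma\colon\Delta[n]\to N\mathcal{O}$ is a pair $(\alpha,\omega)$ with $\alpha\colon[k]\to[n]$ order-preserving and $\omega=(b\to\sigma\alpha(0)\to\cdots\to\sigma\alpha(k))$ with maps after the first given by $\sigma\alpha(i-1\to i)$. For such $\sigma$ with initial vertex $\sigma_0$, $\iota_n\colon\mathcal{O}(-,\sigma_0)\times\Delta[n]\to F\sigma$ sends $(g,\alpha)\in\mathcal{O}(b,\sigma_0)\times\Delta[n]_k$ to $(\alpha,\omega)$ with $\omega=(b\xrightarrow{\sigma(0\to\alpha(0))\circ g}\sigma\alpha(0)\to\cdots\to\sigma\alpha(k))$. *)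

From Stdlib Require Import FunctionalExtensionality ProofIrrelevance.
From HB Require Import structures.
From mathcomp Require Import all_boot.

Unset Strict Implicit.
Unset Printing Implicit Defensive.

Record Cat : Type := MkCat {
  ob : Type;
  hom : ob -> ob -> Type;
  idm : forall a, hom a a;
  comp : forall a b c, hom b c -> hom a b -> hom a c;
  comp_id_l : forall a b (f : hom a b), comp _ _ _ (idm b) f = f;
  comp_id_r : forall a b (f : hom a b), comp _ _ _ f (idm a) = f;
  comp_assoc : forall a b c d (h : hom c d) (g : hom b c) (f : hom a b),
      comp _ _ _ h (comp _ _ _ g f) = comp _ _ _ (comp _ _ _ h g) f }.
Arguments idm {c0} a.
Arguments comp {c0 a b c} _ _.
Arguments comp_assoc {c0 a b c d} h g f.
Arguments comp_id_l {c0 a b} f.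
Arguments comp_id_r {c0 a b} f.

(* Order-preserving maps [k] -> [n] (morphisms of the simplex category) *)
Record mono (k n : nat) := Mono {
  mfun :> 'I_k.+1 -> 'I_n.+1;
  mfun_homo : forall i j : 'I_k.+1, (i <= j)%N -> (mfun i <= mfun j)%N }.
Arguments Mono {k n} mfun mfun_homo.
Arguments mfun {k n} _ _.
Arguments mfun_homo {k n} _ {i j} _.

Definition mono_comp k m n (a : mono m n) (c : mono k m) : mono k n :=
  @Mono k n (fun i => a (c i)) (fun i j h => mfun_homo a (mfun_homo c h)).
Arguments mono_comp {k m n} a c.

Definition mono_id n : mono n n := @Mono n n (fun i => i) (fun i j h => h).

Lemma d0_homo m (i j : 'I_m.+1) : (i <= j)%N ->
  ((lift ord0 i : 'I_m.+2) <= (lift ord0 j : 'I_m.+2))%N.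
Proof. by rewrite !lift0 ltnS. Qed.

Definition d0 m : mono m m.+1 := @Mono m m.+1 (lift ord0) (@d0_homo m).

Lemma mono0 k n (a : mono k n) (j : 'I_k.+1) : (a ord0 <= a j)%N.
Proof. by apply: mfun_homo; rewrite leq0n. Qed.

Lemma mono_eq k n (a b : mono k n) : (forall i, a i = b i) -> a = b.
Proof.
case: a b => f fh [g gh] /= E.
have efg : f = g := functional_extensionality _ _ E.
subst g; by rewrite (proof_irrelevance _ fh gh).
Qed.

(* n-simplices of the nerve N O, i.e. functors [n] -> O
   (by Yoneda, maps Delta[n] -> N O).                                   *)
Record nsimp (C : Cat) (n : nat) := NSimp {
  sobj : 'I_n.+1 -> ob C;
  smor : forall i j : 'I_n.+1, (i <= j)%N -> hom C (sobj i) (sobj j);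
  smor_id : forall (i : 'I_n.+1) (h : (i <= i)%N), smor i i h = @idm C (sobj i);
  smor_comp : forall (i j l : 'I_n.+1) (hij : (i <= j)%N) (hjl : (j <= l)%N)
      (hil : (i <= l)%N), @comp C _ _ _ (smor j l hjl) (smor i j hij) = smor i l hil }.
Arguments smor {C n} _ i j _.
Arguments sobj {C n} _ _.
Arguments smor_id {C n} _ i h.
Arguments smor_comp {C n} _ {i j l} hij hjl hil.
Arguments NSimp {C n} sobj smor smor_id smor_comp.

Lemma smor_pf C n (s : nsimp C n) (i j : 'I_n.+1) (p q : (i <= j)%N) :
  smor s i j p = smor s i j q.
Proof. by rewrite (bool_irrelevance p q). Qed.

Definition nsimp_pre C k n (s : nsimp C n) (a : mono k n) : nsimp C k :=
  @NSimp C k (fun i => sobj s (a i))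
    (fun i j h => smor s (a i) (a j) (mfun_homo a h))
    (fun i h => smor_id s _ _)
    (fun i j l hij hjl hil => smor_comp s _ _ _).

(* Contravariant functors O -> sSet: for each object b a simplicial set
   (ps b, sact), and for each f : b' -> b a simplicial map (oact f),
   functorially.                                                        *)
Record OSS (C : Cat) := MkOSS {
  ps : ob C -> nat -> Type;
  sact : forall b k m, mono m k -> ps b k -> ps b m;
  oact : forall b b' k, hom C b' b -> ps b k -> ps b' k;
  sact_id : forall b k (x : ps b k), sact b k k (mono_id k) x = x;
  sact_comp : forall b k m p (a : mono m k) (c : mono p m) (x : ps b k),
      sact b m p c (sact b k m a x) = sact b k p (mono_comp a c) x;
  oact_id : forall b k (x : ps b k), oact b b k (@idm C b) x = x;
  oact_comp : forall b b' b'' k (g : hom C b' b) (f : hom C b'' b') (x : ps b k),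
      oact b' b'' k f (oact b b' k g x) = oact b b'' k (@comp C _ _ _ g f) x;
  oact_sact : forall b b' k m (f : hom C b' b) (a : mono m k) (x : ps b k),
      oact b b' m f (sact b k m a x) = sact b' k m a (oact b b' k f x) }.
Arguments sact {C} _ {b k m} _ _.
Arguments oact {C} _ {b b' k} _ _.
Arguments MkOSS {C} ps sact oact sact_id sact_comp oact_id oact_comp oact_sact.
Arguments ps {C} _ b k.

Record ntr C (P Q : OSS C) := MkNtr {
  ntf : forall b k, ps P b k -> ps Q b k;
  ntf_s : forall b k m (a : mono m k) (x : ps P b k),
      ntf b m (@sact C P b k m a x) = @sact C Q b k m a (ntf b k x);
  ntf_o : forall b b' k (f : hom C b' b) (x : ps P b k),
      ntf b' k (@oact C P b b' k f x) = @oact C Q b b' k f (ntf b k x) }.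
Arguments ntf {C P Q} _ {b k} _.
Arguments ntf_s {C P Q} _ {b k m} a x.
Arguments ntf_o {C P Q} _ {b b' k} f x.
Arguments MkNtr {C P Q} ntf ntf_s ntf_o.
Arguments ntr {C} P Q.
Set Implicit Arguments.
Arguments mono0 {k n} a j.
Arguments mono_eq {k n} a b _.
Arguments nsimp_pre {C k n} s a.
Arguments smor_pf {C n} s i j p q.

Definition ntr_comp C (P Q R : OSS C) (t : ntr Q R) (s : ntr P Q) : ntr P R.
Proof.
refine (@MkNtr C P R (fun b k x => ntf t (ntf s x)) _ _).
- by move=> b k m a x; rewrite ntf_s ntf_s.
- by move=> b b' k f x; rewrite ntf_o ntf_o.
Defined.

Definition is_iso C (P Q : OSS C) (t : ntr P Q) : Prop :=
  exists s : ntr Q P,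
    (forall b k (x : ps P b k), ntf s (ntf t x) = x) /\
    (forall b k (y : ps Q b k), ntf t (ntf s y) = y).

Definition is_pushout C (A B C' D : OSS C) (f : ntr A B) (g : ntr A C')
    (i : ntr B D) (j : ntr C' D) : Prop :=
  (forall b k (x : ps A b k), ntf i (ntf f x) = ntf j (ntf g x)) /\
  forall (Q : OSS C) (u : ntr B Q) (v : ntr C' Q),
    (forall b k (x : ps A b k), ntf u (ntf f x) = ntf v (ntf g x)) ->
    exists h : ntr D Q,
      (forall b k (x : ps B b k), ntf h (ntf i x) = ntf u x) /\
      (forall b k (x : ps C' b k), ntf h (ntf j x) = ntf v x) /\
      (forall h' : ntr D Q,
         (forall b k (x : ps B b k), ntf h' (ntf i x) = ntf u x) ->
         (forall b k (x : ps C' b k), ntf h' (ntf j x) = ntf v x) ->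
         forall b k (x : ps D b k), ntf h' x = ntf h x).

Definition RepD C (c : ob C) (n : nat) : OSS C.
Proof.
refine (@MkOSS C (fun b k => (hom C b c * mono k n)%type)
   (fun b k m a x => (x.1, mono_comp x.2 a))
   (fun b b' k f x => (comp x.1 f, x.2)) _ _ _ _ _).
- by move=> b k [g a] /=; congr pair; apply: mono_eq.
- by move=> b k m p a c' [g e] /=; congr pair; apply: mono_eq.
- by move=> b k [g a] /=; rewrite comp_id_r.
- by move=> b b' b'' k g f [h a] /=; rewrite comp_assoc.
- by [].
Defined.

(* F sigma, via the explicit description: a k-simplex of (F sigma)(b) is
   (alpha, omega) with omega = (b -> s(alpha 0) -> ... -> s(alpha k)), the
   maps after the first being s(alpha(i-1) -> alpha i); omega is thus
   recorded by its first arrow. *)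
Definition Fel C n (s : nsimp C n) (b : ob C) (k : nat) : Type :=
  {a : mono k n & hom C b (sobj s (a ord0))}.

Lemma Fel_eq C n (s : nsimp C n) b k (f : 'I_k.+1 -> 'I_n.+1)
  (p p' : forall i j : 'I_k.+1, (i <= j)%N -> (f i <= f j)%N)
  (h : hom C b (sobj s (f ord0))) :
  existT (fun a : mono k n => hom C b (sobj s (a ord0))) (Mono f p) h =
  existT (fun a : mono k n => hom C b (sobj s (a ord0))) (Mono f p') h.
Proof. by rewrite (proof_irrelevance _ p p'). Qed.

Definition Fob C n (s : nsimp C n) : OSS C.
Proof.
refine (@MkOSS C (Fel s)
  (fun b k m c x => existT (fun a : mono m n => hom C b (sobj s (a ord0)))
       (mono_comp (projT1 x) c)
       (comp (smor s _ _ (mono0 (projT1 x) (c ord0))) (projT2 x)))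
  (fun b b' k f x => existT (fun a : mono k n => hom C b' (sobj s (a ord0)))
       (projT1 x) (comp (projT2 x) f)) _ _ _ _ _).
- move=> b k [[f fh] h] /=; rewrite smor_id comp_id_l; exact: Fel_eq.
- move=> b k m p a c [[f fh] h].
  rewrite /mono_comp /= comp_assoc; erewrite smor_comp; exact: Fel_eq.
- by move=> b k [a h] /=; rewrite comp_id_r.
- by move=> b b' b'' k g f [a h] /=; rewrite comp_assoc.
- by move=> b b' k m f a [a' h] /=; rewrite comp_assoc.
Defined.

Definition iota_sigma C n (s : nsimp C n) : ntr (RepD (sobj s ord0) n) (Fob s).
Proof.
refine (@MkNtr C (RepD (sobj s ord0) n) (Fob s)
  (fun b k x => existT (fun a : mono k n => hom C b (sobj s (a ord0)))
      x.2 (comp (smor s ord0 (x.2 ord0) (leq0n _)) x.1)) _ _).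
- move=> b k m a [g e] /=; rewrite comp_assoc; erewrite smor_comp; exact: Fel_eq.
- by move=> b b' k f [g e] /=; rewrite comp_assoc.
Defined.

Definition postc C (c c' : ob C) (g : hom C c c') n :
  ntr (RepD c n) (RepD c' n).
Proof.
refine (@MkNtr C (RepD c n) (RepD c' n) (fun b k x => (comp g x.1, x.2)) _ _).
- by [].
- by move=> b b' k f [h e] /=; rewrite comp_assoc.
Defined.

Definition one_d0 C (c : ob C) m : ntr (RepD c m) (RepD c m.+1).
Proof.
refine (@MkNtr C (RepD c m) (RepD c m.+1)
   (fun b k x => (x.1, mono_comp (d0 m) x.2)) _ _).
- by move=> b k p a [g e] /=; congr pair; apply: mono_eq.
- by [].
Defined.

Definition Fface C m (s : nsimp C m.+1) :
  ntr (Fob (nsimp_pre s (d0 m))) (Fob s).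
Proof.
refine (@MkNtr C (Fob (nsimp_pre s (d0 m))) (Fob s)
  (fun b k x => existT (fun a : mono k m.+1 => hom C b (sobj s (a ord0)))
      (mono_comp (d0 m) (projT1 x)) (projT2 x)) _ _).
- move=> b k p a [[f fh] h] /=.
  rewrite (smor_pf s _ _ _ (mono0 (mono_comp (d0 m) (Mono f fh)) (a ord0))).
  rewrite /mono_comp /=; exact: Fel_eq.
- by [].
Defined.

Definition first_arrow C m (s : nsimp C m.+1) :
  hom C (sobj s ord0) (sobj s (d0 m ord0)) :=
  smor s ord0 (d0 m ord0) (leq0n _).

(* A simplex (alpha, b -> sigma(alpha 0)) of F sigma either has alpha 0 = 0,
   and then it is the image under iota_n of a unique simplex, or alpha 0 > 0,
   and then alpha = delta_0 o alpha' for a unique alpha', so it comes from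
   F(sigma delta_0).  For n = 0 only the first case occurs.  For n > 0 a cocone
   (u, v) is glued by cases on alpha 0; the cocone condition makes the glued map
   agree with v on the whole image of iota_n, and since every simplex lies in
   the image of iota_n or of the face map, naturality and uniqueness follow. *)

From mathcomp Require Import all_boot zify.
Set Implicit Arguments.
Unset Strict Implicit.

Section NerveArrows.
Variables (C : Cat) (n : nat) (s : nsimp C n).

Lemma smor_compA (i j l : 'I_n.+1) (hij : (i <= j)%N) (hjl : (j <= l)%N)
    b (x : hom C b (sobj s i)) :
  comp (smor s j l hjl) (comp (smor s i j hij) x)
  = comp (smor s i l (leq_trans hij hjl)) x.
Proof. by rewrite comp_assoc (smor_comp s hij hjl (leq_trans hij hjl)). Qed.

Lemma smor_idl (i : 'I_n.+1) (hii : (i <= i)%N) b (x : hom C b (sobj s i)) :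
  comp (smor s i i hii) x = x.
Proof. by rewrite smor_id comp_id_l. Qed.

Lemma comp_smor_pf (i j : 'I_n.+1) (p q : (i <= j)%N) b (x : hom C b (sobj s i)) :
  comp (smor s i j p) x = comp (smor s i j q) x.
Proof. by rewrite (smor_pf s i j p q). Qed.

Lemma Fel_transport b k (a a' : mono k n) (x : hom C b (sobj s (a ord0)))
    (le_aa' : (a ord0 <= a' ord0)%N) :
  a = a' ->
  existT (fun e : mono k n => hom C b (sobj s (e ord0))) a'
    (comp (smor s _ _ le_aa') x) = existT _ a x.
Proof. by move=> eq_aa'; subst a'; rewrite smor_idl. Qed.

End NerveArrows.

Definition iota0_inv (C : Cat) (s : nsimp C 0) : ntr (Fob s) (RepD (sobj s ord0) 0).
Proof.
refine (@MkNtr C (Fob s) (RepD (sobj s ord0) 0)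
  (fun b k y => (comp (smor s (projT1 y ord0) ord0 (leq_ord _)) (projT2 y), projT1 y)) _ _).
- move=> b k m' a [e h] /=; congr pair.
  by rewrite smor_compA; apply: comp_smor_pf.
- by move=> b b' k f [e h] /=; rewrite comp_assoc.
Defined.

Lemma iota0_iso (C : Cat) (s : nsimp C 0) : is_iso (iota_sigma s).
Proof.
exists (iota0_inv s); split.
- by move=> b k [g e] /=; rewrite smor_compA smor_idl.
- by move=> b k [e h] /=; rewrite smor_compA smor_idl.
Qed.

Section FaceFactorization.
Variables (k m : nat).

Definition d0_factor (a : mono k m.+1) : mono k m.
Proof.
refine (@Mono k m (fun i => inord (a i).-1) _).
move=> i j le_ij; have ai_lt := ltn_ord (a i); have aj_lt := ltn_ord (a j).
have := mfun_homo a le_ij; rewrite !inordK; lia.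
Defined.

Lemma leq_d0_factor (a : mono k m.+1) i : (a i <= d0 m (d0_factor a i))%N.
Proof. have ai_lt := ltn_ord (a i); rewrite lift0 inordK; lia. Qed.

Lemma d0_factorK (a : mono k m.+1) :
  (0 < a ord0)%N -> mono_comp (d0 m) (d0_factor a) = a.
Proof.
move=> a0_gt0; apply: mono_eq => i; apply: val_inj => /=.
have ai_lt := ltn_ord (a i); have a0_le := mono0 a i.
rewrite /bump /= inordK; lia.
Qed.

Lemma d0_factor_d0 (e : mono k m) : d0_factor (mono_comp (d0 m) e) = e.
Proof. by apply: mono_eq => i; apply: val_inj; rewrite /= /bump /= add0n inordK. Qed.

End FaceFactorization.

Section FacePushout.
Variables (C : Cat) (m : nat) (s : nsimp C m.+1).

Local Notation Rm := (RepD (sobj s ord0) m).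
Local Notation Rn := (RepD (sobj s ord0) m.+1).
Local Notation Fd := (Fob (nsimp_pre s (d0 m))).
Local Notation top := (ntr_comp (iota_sigma (nsimp_pre s (d0 m))) (postc (first_arrow s) m)).

Lemma top_map b k (g : hom C b (sobj s ord0)) (e : mono k m)
    (le_0e : (@ord0 m.+1 <= d0 m (e ord0))%N) :
  ntf top ((g, e) : ps Rm b k)
  = existT (fun e : mono k m => hom C b (sobj s (d0 m (e ord0)))) e
      (comp (smor s _ _ le_0e) g).
Proof. by rewrite /= /first_arrow smor_compA (smor_pf s _ _ _ le_0e). Qed.

Lemma face_square_commutes b k (x : ps Rm b k) :
  ntf (Fface s) (ntf top x) = ntf (iota_sigma s) (ntf (one_d0 (sobj s ord0) m) x).
Proof. by case: x => g e; rewrite (top_map _ (leq0n _)). Qed.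

Lemma Fob_cover b k (y : Fel s b k) :
  (exists x : ps Rn b k, y = ntf (iota_sigma s) x) \/
  (exists z : ps Fd b k, y = ntf (Fface s) z).
Proof.
case: y => a x; case: (leqP (a ord0) 0) => [a0_le0 | a0_gt0].
- left; exists (comp (smor s _ ord0 a0_le0) x, a).
  by rewrite /= smor_compA smor_idl.
- right; exists (existT _ (d0_factor a) (comp (smor s _ _ (leq_d0_factor a ord0)) x)).
  by rewrite /= Fel_transport ?d0_factorK.
Qed.

Variables (Q : OSS C) (u : ntr Fd Q) (v : ntr Rn Q).
Hypothesis uv_compat : forall b k (x : ps Rm b k),
  ntf u (ntf top x) = ntf v (ntf (one_d0 (sobj s ord0) m) x).

Definition glue b k (y : Fel s b k) : ps Q b k :=
  let: existT a x := y in
  match leqP (a ord0) 0 with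
  | LeqNotGtn a0_le0 => ntf v ((comp (smor s _ ord0 a0_le0) x, a) : ps Rn b k)
  | GtnNotLeq _ =>
      ntf u (existT (fun e : mono k m => hom C b (sobj s (d0 m (e ord0))))
               (d0_factor a) (comp (smor s _ _ (leq_d0_factor a ord0)) x))
  end.

Lemma glue_iota b k (x : ps Rn b k) : glue (ntf (iota_sigma s) x) = ntf v x.
Proof.
case: x => g a /=; case: (leqP (a ord0) 0) => [a0_le0 | a0_gt0].
  by rewrite smor_compA smor_idl.
by rewrite smor_compA -top_map uv_compat /= d0_factorK.
Qed.

Lemma glue_face b k (z : ps Fd b k) : glue (ntf (Fface s) z) = ntf u z.
Proof.
case: z => e x /=; case: (leqP _ 0) => [// | _].
have le_e : (e ord0 <= d0_factor (mono_comp (d0 m) e) ord0)%N by rewrite d0_factor_d0.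
rewrite (comp_smor_pf _ (mfun_homo (d0 m) le_e)).
by rewrite (@Fel_transport _ _ (nsimp_pre s (d0 m))) ?d0_factor_d0.
Qed.

Lemma glue_sact b k p (c : mono p k) (y : Fel s b k) :
  glue (sact (Fob s) c y) = sact Q c (glue y).
Proof.
by case: (Fob_cover y) => [[x ->] | [z ->]];
  rewrite -ntf_s ?glue_iota ?glue_face ntf_s.
Qed.

Lemma glue_oact b b' k (f : hom C b' b) (y : Fel s b k) :
  glue (oact (Fob s) f y) = oact Q f (glue y).
Proof.
by case: (Fob_cover y) => [[x ->] | [z ->]];
  rewrite -ntf_o ?glue_iota ?glue_face ntf_o.
Qed.

Definition glue_ntr : ntr (Fob s) Q := @MkNtr C (Fob s) Q (@glue) glue_sact glue_oact.

Lemma glue_unique (h : ntr (Fob s) Q) :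
  (forall b k (z : ps Fd b k), ntf h (ntf (Fface s) z) = ntf u z) ->
  (forall b k (x : ps Rn b k), ntf h (ntf (iota_sigma s) x) = ntf v x) ->
  forall b k (y : Fel s b k), ntf h y = glue y.
Proof.
move=> h_face h_iota b k y.
by case: (Fob_cover y) => [[x ->] | [z ->]]; rewrite ?h_iota ?glue_iota ?h_face ?glue_face.
Qed.

End FacePushout.

Lemma iota_face_pushout (C : Cat) m (s : nsimp C m.+1) :
  is_pushout
    (ntr_comp (iota_sigma (nsimp_pre s (d0 m))) (postc (first_arrow s) m))
    (one_d0 (sobj s ord0) m) (Fface s) (iota_sigma s).
Proof.
split=> [|Q u v uv_compat]; first exact: face_square_commutes.
exists (glue_ntr uv_compat); split; [|split].
- exact: glue_face.
- exact: glue_iota.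
- exact: glue_unique.
Qed.

Theorem proposition2p3 (C : Cat) :
  (forall s : nsimp C 0, is_iso (iota_sigma s)) /\
  (forall (m : nat) (s : nsimp C m.+1),
     is_pushout
       (ntr_comp (iota_sigma (nsimp_pre s (d0 m))) (postc (first_arrow s) m))
       (one_d0 (sobj s ord0) m)
       (Fface s)
       (iota_sigma s)).
Proof. by split; [exact: iota0_iso | exact: iota_face_pushout]. Qed.
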